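(* Fix $p\in[0,\infty]$. Let $(R_t)_{t=0}^{T-1}$ be a dynamic monetary risk measure and $(U_t)_{t=0}^{T-1}$ a dynamic monetary utility function (both for this $p$), and let $\eta_t\in L^0(\mathcal{F}_t)$ with $\eta_t>0$ for each $t$. (i) For each $t\in\{0,\dots,T-1\}$, the map $$W_t(Y):=R_t(-Y)-\frac{1}{1+\eta_t}U_t\big(\big(R_t(-Y)-Y\big)_+\big)$$ is a mapping from $L^p(\mathcal{F}_{t+1})$ to $L^p(\mathcal{F}_t)$ with the properties: if $\lambda\in L^p(\mathcal{F}_t)$ and $Y\in L^p(\mathcal{F}_{t+1})$ then $W_t(Y+\lambda)=W_t(Y)+\lambda$; if $Y,\widetilde Y\in L^p(\mathcal{F}_{t+1})$ and $Y\le \widetilde Y$ then $W_t(Y)\le W_t(\widetilde Y)$; if $c\in L^p_+(\mathcal{F}_t)$ and $Y\in L^p(\mathcal{F}_{t+1})$ then $W_t(cY)=cW_t(Y)$. (ii) Let $(X_t)_{t=1}^T$ be an $\mathbb{F}$-adapted cash flow with $X_t\in L^p(\mathcal{F}_t)$ for every $t$, and define $V_T(X):=0$ and recursively, for $t=T-1,\dots,0$, with $Y_{t+1}:=X_{t+1}+V_{t+1}(X)$, $$V_t(X):=R_t(-Y_{t+1})-\frac{1}{1+\eta_t}U_t\big(\big(R_t(-Y_{t+1})-Y_{t+1}\big)_+\big).$$ Then for every $t\in\{0,\dots,T-1\}$, $$V_t(X)=W_t\circ\dots\circ W_{T-1}(X_{t+1}+\dots+X_T).$$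
   Context: Let $T\ge 1$ be an integer and $(\Omega,\mathcal{F},\mathbb{F},\mathbb{P})$ a filtered probability space with $\mathbb{F}=(\mathcal{F}_t)_{t=0}^T$ and $\{\emptyset,\Omega\}=\mathcal{F}_0\subseteq\dots\subseteq\mathcal{F}_T=\mathcal{F}$. $L^0(\mathcal{F}_t)$ is the space of real-valued $\mathcal{F}_t$-measurable random variables; for $p\in(0,\infty)$, $L^p(\mathcal{F}_t)=\{Y\in L^0(\mathcal{F}_t):\mathbb{E}|Y|^p<\infty\}$; $L^\infty(\mathcal{F}_t)$ is the space of essentially bounded $\mathcal{F}_t$-measurable random variables; $L^p_+(\mathcal{F}_t)$ denotes the nonnegative elements of $L^p(\mathcal{F}_t)$. Random variables equal a.s. are identified and all (in)equalities are understood $\mathbb{P}$-a.s. $x_+=\max(x,0)$. For $p\in[0,\infty]$, a dynamic monetary risk measure is a sequence of maps $R_t:L^p(\mathcal{F}_{t+1})\to L^p(\mathcal{F}_t)$, $t=0,\dots,T-1$, such that $R_t(Y+\lambda)=R_t(Y)-\lambda$ for $\lambda\in L^p(\mathcal{F}_t)$, $Y\in L^p(\mathcal{F}_{t+1})$; $Y\le\widetilde Y$ implies $R_t(Y)\ge R_t(\widetilde Y)$; and $R_t(cY)=cR_t(Y)$ for $c\in L^p_+(\mathcal{F}_t)$. A dynamic monetary utility function is a sequence of maps $U_t:L^p(\mathcal{F}_{t+1})\to L^p(\mathcal{F}_t)$, $t=0,\dots,T-1$, such that $U_t(Y+\lambda)=U_t(Y)+\lambda$ for $\lambda\in L^p(\mathcal{F}_t)$;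 $Y\le\widetilde Y$ implies $U_t(Y)\le U_t(\widetilde Y)$; and $U_t(cY)=cU_t(Y)$ for $c\in L^p_+(\mathcal{F}_t)$. *)

From mathcomp Require Import all_boot all_order all_algebra.
From mathcomp Require Import all_classical all_reals all_analysis.
Set Implicit Arguments. Unset Strict Implicit. Unset Printing Implicit Defensive.
Import Order.TTheory GRing.Theory Num.Theory.
Local Open Scope classical_set_scope.
Local Open Scope ring_scope.

Section Defs.
Context {R : realType} {d : measure_display} {Om : measurableType d}.

Definition Gmeas (G : set (set Om)) (f : Om -> R) : Prop :=
  forall B : set R, measurable B -> G (f @^-1` B).

Definition is_filtration (T : nat) (F : nat -> set (set Om)) : Prop :=
  [/\ (forall t, (t <= T)%N -> sigma_algebra setT (F t)),
      (forall s t, (s <= t)%N -> (t <= T)%N -> F s `<=` F t),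
      (forall A, F 0%N A <-> (A = set0 \/ A = setT)) &
      (forall A, F T A <-> measurable A)].

Definition inLp (P : probability Om R) (p : \bar R) (G : set (set Om))
    (Y : Om -> R) : Prop :=
  Gmeas G Y /\
  (if p is +oo%E then exists M : R, {ae P, forall x, `|Y x| <= M}
   else if p is r%:E then (r = 0) \/ (\int[P]_x ((`|Y x| `^ r)%:E) < +oo)%E
   else False).

Definition is_dyn_utility (P : probability Om R) (p : \bar R) (T : nat)
    (F : nat -> set (set Om)) (U : nat -> (Om -> R) -> (Om -> R)) : Prop :=
  forall t, (t < T)%N ->
  [/\ (forall Y, inLp P p (F t.+1) Y -> inLp P p (F t) (U t Y)),
      (forall (lam Y : Om -> R), inLp P p (F t) lam -> inLp P p (F t.+1) Y ->
         {ae P, forall x, U t (Y \+ lam) x = U t Y x + lam x}),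
      (forall (Y Y' : Om -> R), inLp P p (F t.+1) Y -> inLp P p (F t.+1) Y' ->
         {ae P, forall x, Y x <= Y' x} -> {ae P, forall x, U t Y x <= U t Y' x}) &
      (forall (c Y : Om -> R), inLp P p (F t) c -> {ae P, forall x, 0 <= c x} ->
         inLp P p (F t.+1) Y -> inLp P p (F t.+1) (c \* Y) ->
         {ae P, forall x, U t (c \* Y) x = c x * U t Y x})].

Definition is_dyn_risk (P : probability Om R) (p : \bar R) (T : nat)
    (F : nat -> set (set Om)) (Rm : nat -> (Om -> R) -> (Om -> R)) : Prop :=
  forall t, (t < T)%N ->
  [/\ (forall Y, inLp P p (F t.+1) Y -> inLp P p (F t) (Rm t Y)),
      (forall (lam Y : Om -> R), inLp P p (F t) lam -> inLp P p (F t.+1) Y ->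
         {ae P, forall x, Rm t (Y \+ lam) x = Rm t Y x - lam x}),
      (forall (Y Y' : Om -> R), inLp P p (F t.+1) Y -> inLp P p (F t.+1) Y' ->
         {ae P, forall x, Y x <= Y' x} -> {ae P, forall x, Rm t Y' x <= Rm t Y x}) &
      (forall (c Y : Om -> R), inLp P p (F t) c -> {ae P, forall x, 0 <= c x} ->
         inLp P p (F t.+1) Y -> inLp P p (F t.+1) (c \* Y) ->
         {ae P, forall x, Rm t (c \* Y) x = c x * Rm t Y x})].

Definition Wmap (Rm U : nat -> (Om -> R) -> (Om -> R)) (eta : nat -> Om -> R)
    (t : nat) (Y : Om -> R) : Om -> R :=
  fun x => Rm t (fun y => - Y y) x
    - (1 + eta t x)^-1 * U t (fun y => Num.max (Rm t (fun z => - Y z) y - Y y) 0) x.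

(* Vaux n = V_{T-n}(X): V_T = 0, V_t = formula with Y_{t+1} = X_{t+1} + V_{t+1} *)
Fixpoint Vaux (Rm U : nat -> (Om -> R) -> (Om -> R)) (eta : nat -> Om -> R)
    (T : nat) (X : nat -> Om -> R) (n : nat) : Om -> R :=
  match n with
  | 0%N => fun _ => 0
  | n'.+1 =>
      let t := (T - n'.+1)%N in
      let Y := fun x => X t.+1 x + Vaux Rm U eta T X n' x in
      fun x => Rm t (fun y => - Y y) x
        - (1 + eta t x)^-1 * U t (fun y => Num.max (Rm t (fun z => - Y z) y - Y y) 0) x
  end.

Definition V Rm U eta T X (t : nat) : Om -> R := Vaux Rm U eta T X (T - t).

Fixpoint Wchain (Rm U : nat -> (Om -> R) -> (Om -> R)) (eta : nat -> Om -> R)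
    (n t : nat) (Z : Om -> R) : Om -> R :=
  match n with
  | 0%N => Z
  | n'.+1 => Wmap Rm U eta t (Wchain Rm U eta n' t.+1 Z)
  end.

End Defs.

(* Translation invariance and positive homogeneity of W_t are inherited from
   R_t and U_t, since (R_t(-Y) - Y)_+ is unchanged by Y |-> Y + lambda and
   scales with c >= 0.  For monotonicity write
   (R_t(-Y) - Y)_+ = max(-Y, -R_t(-Y)) + R_t(-Y); translation invariance of U_t
   then gives, with k = 1/(1 + eta_t) in [0, 1],
     W_t(Y) = (1 - k) R_t(-Y) - k U_t(max(-Y, -R_t(-Y))),
   and both terms are nondecreasing in Y.
   For (ii), V_t = W_t(X_{t+1} + V_{t+1}) and, by backward induction,
   V_{t+1} = W_{t+1} o ... o W_{T-1}(X_{t+2} + ... + X_T); this composition of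
   monetary utilities is translation invariant with respect to the
   F_{t+1}-measurable X_{t+1}, which moves X_{t+1} inside. *)

From mathcomp Require Import all_boot all_order all_algebra.
From mathcomp Require Import all_classical all_reals all_analysis.
From mathcomp Require Import measurable_realfun.
From mathcomp Require Import ring lra.
Import Order.TTheory GRing.Theory Num.Theory.
Local Open Scope classical_set_scope.
Local Open Scope ring_scope.

Lemma measurable_inv (R : realType) : measurable_fun setT (@GRing.inv R).
Proof.
have nz_open : open (~` [set 0] : set R).
  apply/closed_openC/accessible_closed_set1/hausdorff_accessible; exact: norm_hausdorff.
have -> : [set: R] = [set 0] `|` ~` [set 0] by rewrite setUv.
apply/measurable_funU; [exact: measurable_set1 | exact: measurableC (measurable_set1 _) |].
split; first exact: measurable_fun_set1.
apply: open_continuous_measurable_fun => // x /[!inE] x0.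
exact/inv_continuous/eqP.
Qed.

Section Gmeas.
Context {R : realType} {d : measure_display} {Om : measurableType d}.
Variable G : set (set Om).

Lemma Gmeas_comp (h : R -> R) (f : Om -> R) :
  measurable_fun setT h -> Gmeas G f -> Gmeas G (h \o f).
Proof.
move=> mh mf B mB; rewrite comp_preimage; apply: mf.
by rewrite -[_ @^-1` B]setTI; exact: mh.
Qed.

Lemma GmeasN (f : Om -> R) : Gmeas G f -> Gmeas G (fun x => - f x).
Proof. exact: (Gmeas_comp -%R f (@oppr_measurable R setT)). Qed.

Hypothesis sG : sigma_algebra setT G.

Lemma GmeasP (f : Om -> R) :
  Gmeas G f <-> measurable_fun setT (f : g_sigma_algebraType G -> R).
Proof.
split=> [mf _ B mB | mf B mB].
  by rewrite setTI [X in X _]measurable_g_measurableTypeE //; exact: mf.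
by have := mf measurableT B mB; rewrite setTI [X in X _ -> _]measurable_g_measurableTypeE.
Qed.

Lemma Gmeas_cst (c : R) : Gmeas G (fun _ => c).
Proof. exact/GmeasP/measurable_cst. Qed.

Lemma GmeasD (f g : Om -> R) : Gmeas G f -> Gmeas G g -> Gmeas G (fun x => f x + g x).
Proof. by move=> /GmeasP mf /GmeasP mg; apply/GmeasP; exact: measurable_funD. Qed.

Lemma GmeasM (f g : Om -> R) : Gmeas G f -> Gmeas G g -> Gmeas G (fun x => f x * g x).
Proof. by move=> /GmeasP mf /GmeasP mg; apply/GmeasP; exact: measurable_funM. Qed.

Lemma Gmeas_max (f g : Om -> R) :
  Gmeas G f -> Gmeas G g -> Gmeas G (fun x => Num.max (f x) (g x)).
Proof. by move=> /GmeasP mf /GmeasP mg; apply/GmeasP; exact: measurable_maxr. Qed.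

End Gmeas.

Lemma powR_le_add2 (R : realType) (r a b c : R) : 0 <= r -> 0 <= a -> 0 <= b -> 0 <= c ->
  a <= b + c -> a `^ r <= 2 `^ r * (b `^ r + c `^ r).
Proof.
move=> r0 a0 b0 c0 abc; have m0 : 0 <= Num.max b c by rewrite le_max b0.
have bc_max : b + c <= 2 * Num.max b c.
  by rewrite mulr2n mulrDl mul1r lerD // le_max lexx ?orbT.
apply: (@le_trans _ _ ((2 * Num.max b c) `^ r)).
  by apply: ge0_ler_powR; rewrite ?nnegrE ?mulr_ge0 // (le_trans abc).
rewrite powRM // ler_wpM2l ?powR_ge0 //.
by have [_|_] := leP b c; rewrite ?lerDl ?lerDr powR_ge0.
Qed.

Section integral_powR.
Context {R : realType} {d : measure_display} {Om : measurableType d}.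
Variable mu : {measure set Om -> \bar R}.
Local Open Scope ereal_scope.

Lemma integral_powR_dominated {r : R} {f g h : Om -> R} : (0 <= r)%R ->
  measurable_fun setT f -> measurable_fun setT g -> measurable_fun setT h ->
  {ae mu, forall x, (`|f x| <= `|g x| + `|h x|)%R} ->
  \int[mu]_x (`|g x| `^ r)%:E < +oo -> \int[mu]_x (`|h x| `^ r)%:E < +oo ->
  \int[mu]_x (`|f x| `^ r)%:E < +oo.
Proof.
move=> r0 mf mg mh fgh ig ih.
have mpow (k : Om -> R) : measurable_fun setT k ->
    measurable_fun setT (fun x => (`|k x| `^ r)%:E).
  move=> mk; apply/measurable_EFinP.
  apply: (measurableT_comp (measurable_powR r)).
  exact: measurableT_comp (@normr_measurable R setT) mk.
have pow_ge0 (k : Om -> R) x : 0 <= (`|k x| `^ r)%:E by rewrite lee_fin powR_ge0.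
have mgh : measurable_fun setT (fun x => (`|g x| `^ r)%:E + (`|h x| `^ r)%:E).
  by apply: emeasurable_funD; exact: mpow.
pose bound x := (2 `^ r)%:E * ((`|g x| `^ r)%:E + (`|h x| `^ r)%:E).
apply: (@le_lt_trans _ _ (\int[mu]_x bound x)).
  apply: (ae_ge0_le_integral measurableT (fun x _ => pow_ge0 f x) (mpow f mf) _ _ _).
  - by move=> x _; rewrite /bound mule_ge0 ?adde_ge0 ?lee_fin ?powR_ge0.
  - exact: emeasurable_funM (measurable_cst _) mgh.
  - apply: filterS fgh => x fgh_x _.
    by rewrite /bound -EFinD -EFinM lee_fin powR_le_add2.
rewrite /bound ge0_integralZl //; last by move=> x _; exact: adde_ge0.
rewrite ge0_integralD //; try exact: mpow.
apply: lte_mul_pinfty; [by rewrite lee_fin powR_ge0 | by [] | exact: (lte_add_pinfty ig ih)].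
Qed.

End integral_powR.

Section inLp.
Context {R : realType} {d : measure_display} {Om : measurableType d}.
Variables (P : probability Om R) (p : \bar R) (G : set (set Om)).

Lemma inLp_sub (G' : set (set Om)) (f : Om -> R) :
  G `<=` G' -> inLp P p G f -> inLp P p G' f.
Proof. by move=> GG' [mf Lf]; split=> // B mB; exact/GG'/mf. Qed.

Hypotheses (p0 : (0 <= p)%E) (GM : G `<=` measurable).

Lemma inLp_dominated {f g h : Om -> R} : Gmeas G f -> inLp P p G g -> inLp P p G h ->
  {ae P, forall x, `|f x| <= `|g x| + `|h x|} -> inLp P p G f.
Proof.
have Gmeas_mfun (k : Om -> R) : Gmeas G k -> measurable_fun setT k.
  by move=> mk _ B mB; rewrite setTI; exact/GM/mk.
move=> mf [mg Lg] [mh Lh] fgh; split; first exact: mf.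
case: p p0 Lg Lh => [r r0 | _ | //]; cbn iota beta.
  case=> [->|Lg]; first by left.
  case=> [->|Lh]; first by left.
  right; rewrite lee_fin in r0.
  by apply: (integral_powR_dominated _ r0 _ _ _ fgh Lg Lh); exact: Gmeas_mfun.
move=> [M1 gM1] [M2 hM2]; exists (M1 + M2).
apply: (filterS3 _ _ fgh gM1 hM2) => x fgh_x gx hx.
by rewrite (le_trans fgh_x) ?lerD.
Qed.

Lemma inLpN (f : Om -> R) : inLp P p G f -> inLp P p G (fun x => - f x).
Proof.
move=> Lf; apply: (inLp_dominated _ Lf Lf); first exact: GmeasN Lf.1.
by apply: aeW => x; rewrite normrN lerDl.
Qed.

Hypothesis sG : sigma_algebra setT G.

Lemma inLp_cst (c : R) : inLp P p G (fun _ => c).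
Proof.
split; first exact: Gmeas_cst.
case: p p0 => [r| |] //= _; last by exists `|c|; exact: aeW.
by right; rewrite integral_cst //= probability_setT mule1 ltry.
Qed.

Lemma inLpD (f g : Om -> R) :
  inLp P p G f -> inLp P p G g -> inLp P p G (fun x => f x + g x).
Proof.
move=> Lf Lg; apply: (inLp_dominated _ Lf Lg); first exact: GmeasD Lf.1 Lg.1.
by apply: aeW => x; exact: ler_normD.
Qed.

Lemma inLp_max (f g : Om -> R) :
  inLp P p G f -> inLp P p G g -> inLp P p G (fun x => Num.max (f x) (g x)).
Proof.
move=> Lf Lg; apply: (inLp_dominated _ Lf Lg); first exact: Gmeas_max Lf.1 Lg.1.
by apply: aeW => x; have [_|_] := leP (f x) (g x); rewrite ?lerDr ?lerDl.
Qed.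

End inLp.

Lemma backward_ind (T : nat) (Q : nat -> Prop) :
  Q T -> (forall t, (t < T)%N -> Q t.+1 -> Q t) -> forall t, (t <= T)%N -> Q t.
Proof.
move=> QT QS t /subnKC; move: (T - t)%N => k; elim: k t => [|k IH] t tk.
  by rewrite addn0 in tk; rewrite tk.
apply: QS; first by rewrite -tk addnS ltnS leq_addr.
by apply: IH; rewrite addSnnS.
Qed.

Lemma inv1D_ge0_le1 (R : realFieldType) (e : R) : 0 <= e -> 0 <= (1 + e)^-1 <= 1.
Proof.
by move=> e0; rewrite invr_ge0 invf_le1 ?lerDl ?addr_ge0 ?ltr_pwDl.
Qed.

Section filtration.
Context {R : realType} {d : measure_display} {Om : measurableType d}.
Context {P : probability Om R} {T : nat} {F : nat -> set (set Om)} {p : \bar R}.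
Hypotheses (HF : is_filtration T F) (p0 : (0 <= p)%E).

Notation Lp := (inLp P p).

Lemma filtration_sigma {t} : (t <= T)%N -> sigma_algebra setT (F t).
Proof. by case: HF => + _ _ _; apply. Qed.

Lemma filtration_measurable {t} : (t <= T)%N -> F t `<=` measurable.
Proof. by case: HF => _ FF _ FT tT A /(FF t T tT (leqnn T)) /FT. Qed.

Lemma Lp_le {s t f} : (s <= t)%N -> (t <= T)%N -> Lp (F s) f -> Lp (F t) f.
Proof. by case: HF => _ FF _ _ st tT; apply: inLp_sub; exact: FF. Qed.

Lemma Lp_cst {t} c : (t <= T)%N -> Lp (F t) (fun _ => c).
Proof. by move=> tT; apply: inLp_cst => //; exact: filtration_sigma. Qed.

Lemma LpN {t f} : (t <= T)%N -> Lp (F t) f -> Lp (F t) (fun x => - f x).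
Proof. by move=> tT; apply: inLpN => //; exact: filtration_measurable. Qed.

Lemma LpD {t f g} : (t <= T)%N -> Lp (F t) f -> Lp (F t) g -> Lp (F t) (fun x => f x + g x).
Proof.
by move=> tT; apply: inLpD => //; [exact: filtration_measurable | exact: filtration_sigma].
Qed.

Lemma Lp_max {t f g} : (t <= T)%N -> Lp (F t) f -> Lp (F t) g ->
  Lp (F t) (fun x => Num.max (f x) (g x)).
Proof.
by move=> tT; apply: inLp_max => //; [exact: filtration_measurable | exact: filtration_sigma].
Qed.

Lemma Lp_dominated {t} {f g h : Om -> R} : (t <= T)%N -> Gmeas (F t) f ->
  Lp (F t) g -> Lp (F t) h -> {ae P, forall x, `|f x| <= `|g x| + `|h x|} -> Lp (F t) f.
Proof. by move=> tT; apply: inLp_dominated => //; exact: filtration_measurable. Qed.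

Lemma dyn_utility_congr_ae {Uf : nat -> (Om -> R) -> Om -> R} {t Y Y'} :
  is_dyn_utility P p T F Uf -> (t < T)%N -> Lp (F t.+1) Y -> Lp (F t.+1) Y' ->
  {ae P, forall x, Y x = Y' x} -> {ae P, forall x, Uf t Y x = Uf t Y' x}.
Proof.
move=> HUf tT LY LY' YY'; have [_ _ Umono _] := HUf t tT.
have /Umono le_UY : {ae P, forall x, Y x <= Y' x} by apply: filterS YY' => x ->.
have /Umono ge_UY : {ae P, forall x, Y' x <= Y x} by apply: filterS YY' => x ->.
by apply: (filterS2 _ _ (le_UY LY LY') (ge_UY LY' LY)) => x *; apply/le_anti/andP.
Qed.

Section one_step.
Context {Rm U : nat -> (Om -> R) -> Om -> R} {eta : nat -> Om -> R}.
Hypotheses (HR : is_dyn_risk P p T F Rm) (HU : is_dyn_utility P p T F U).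
Hypothesis Heta : forall t, (t < T)%N ->
  inLp P 0%E (F t) (eta t) /\ {ae P, forall x, 0 < eta t x}.

Let shortfall t (Y : Om -> R) : Om -> R :=
  fun y => Num.max (Rm t (fun z => - Y z) y - Y y) 0.

Lemma risk_Lp {t Y} : (t < T)%N -> Lp (F t.+1) Y -> Lp (F t) (Rm t (fun y => - Y y)).
Proof. by move=> tT LY; have [+ _ _ _] := HR t tT; apply; exact: LpN. Qed.

Lemma shortfall_Lp {t Y} : (t < T)%N -> Lp (F t.+1) Y -> Lp (F t.+1) (shortfall t Y).
Proof.
move=> tT LY; apply: (Lp_max tT _ (Lp_cst 0 tT)).
exact: LpD tT (Lp_le (leqnSn t) tT (risk_Lp tT LY)) (LpN tT LY).
Qed.

Lemma Gmeas_discount {t} : (t < T)%N -> Gmeas (F t) (fun x => (1 + eta t x)^-1).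
Proof.
move=> tT; have sF := filtration_sigma (ltnW tT).
apply: (Gmeas_comp _ _ (fun x => 1 + eta t x) (measurable_inv R)).
by apply: GmeasD => //; [exact: Gmeas_cst | exact: (Heta t tT).1.1].
Qed.

Lemma Wmap_Lp {t Y} : (t < T)%N -> Lp (F t.+1) Y -> Lp (F t) (Wmap Rm U eta t Y).
Proof.
move=> tT LY; have sF := filtration_sigma (ltnW tT).
have LR := risk_Lp tT LY.
have LU : Lp (F t) (U t (shortfall t Y)).
  by have [+ _ _ _] := HU t tT; apply; exact: shortfall_Lp.
apply: (Lp_dominated (ltnW tT) _ LR LU).
  apply: (GmeasD _ sF _ _ LR.1).
  exact: (GmeasN _ _ (GmeasM _ sF _ _ (Gmeas_discount tT) LU.1)).
apply: filterS (Heta t tT).2 => x /ltW /inv1D_ge0_le1 /andP[k0 k1].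
rewrite (le_trans (ler_normB _ _)) // lerD2l normrM ger0_norm //.
exact: ler_piMl.
Qed.

Lemma Wmap_translation {t lam Y} : (t < T)%N -> Lp (F t) lam -> Lp (F t.+1) Y ->
  {ae P, forall x, Wmap Rm U eta t (Y \+ lam) x = Wmap Rm U eta t Y x + lam x}.
Proof.
move=> tT Llam LY; have [_ Rtransl _ _] := HR t tT.
have LYlam := LpD tT LY (Lp_le (leqnSn t) tT Llam).
have eN : (fun y => - (Y \+ lam) y) = (fun y => - Y y) \+ (fun y => - lam y).
  by apply/funext => y /=; rewrite opprD.
have RYlam := Rtransl _ _ (LpN (ltnW tT) Llam) (LpN tT LY).
have eZ : {ae P, forall y, shortfall t (Y \+ lam) y = shortfall t Y y}.
  apply: filterS RYlam => y RYy; rewrite /shortfall eN RYy /=.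
  by congr (Num.max _ 0); ring.
have UZ := dyn_utility_congr_ae HU tT (shortfall_Lp tT LYlam) (shortfall_Lp tT LY) eZ.
apply: (filterS2 _ _ RYlam UZ) => x RYx UZx.
by rewrite /Wmap -!/(shortfall t _) UZx eN RYx; ring.
Qed.

Lemma Wmap_monotone {t Y Y'} : (t < T)%N -> Lp (F t.+1) Y -> Lp (F t.+1) Y' ->
  {ae P, forall x, Y x <= Y' x} ->
  {ae P, forall x, Wmap Rm U eta t Y x <= Wmap Rm U eta t Y' x}.
Proof.
move=> tT LY LY' YY'; have [_ _ Rmono _] := HR t tT; have [_ Utransl Umono _] := HU t tT.
pose M (Z : Om -> R) y := Num.max (- Z y) (- Rm t (fun z => - Z z) y).
have LM Z : Lp (F t.+1) Z -> Lp (F t.+1) (M Z).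
  by move=> LZ; exact: Lp_max tT (LpN tT LZ) (LpN tT (Lp_le (leqnSn t) tT (risk_Lp tT LZ))).
have WmapE Z : Lp (F t.+1) Z -> {ae P, forall x, Wmap Rm U eta t Z x =
    Rm t (fun y => - Z y) x - (1 + eta t x)^-1 * (U t (M Z) x + Rm t (fun y => - Z y) x)}.
  move=> LZ; have eZ : shortfall t Z = M Z \+ Rm t (fun y => - Z y).
    by apply/funext => y; rewrite /shortfall /M /= addr_maxl addNr addrC.
  apply: filterS (Utransl _ _ (risk_Lp tT LZ) (LM Z LZ)) => x UZx.
  by rewrite /Wmap -/(shortfall t Z) eZ UZx.
have RR : {ae P, forall x, Rm t (fun y => - Y y) x <= Rm t (fun y => - Y' y) x}.
  apply: Rmono (LpN tT LY') (LpN tT LY) _.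
  by apply: filterS YY' => x; rewrite lerN2.
have MM : {ae P, forall x, U t (M Y') x <= U t (M Y) x}.
  apply: Umono (LM Y' LY') (LM Y LY) _.
  apply: (filterS2 _ _ YY' RR) => x YYx RRx.
  by rewrite /M ge_max !le_max !lerN2 YYx RRx orbT.
move: (WmapE Y LY) (WmapE Y' LY'); apply: filter_app2.
apply: (filterS3 _ _ RR MM (Heta t tT).2) => x RRx MMx.
by move=> /ltW /inv1D_ge0_le1 /andP[k0 k1] -> ->; nra.
Qed.

Lemma Wmap_homogeneous {t c Y} : (t < T)%N -> Lp (F t) c -> {ae P, forall x, 0 <= c x} ->
  Lp (F t.+1) Y -> Lp (F t.+1) (c \* Y) ->
  {ae P, forall x, Wmap Rm U eta t (c \* Y) x = c x * Wmap Rm U eta t Y x}.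
Proof.
move=> tT Lc c0 LY LcY; have [_ _ _ Rhom] := HR t tT; have [_ _ _ Uhom] := HU t tT.
have Lc1 := Lp_le (leqnSn t) tT Lc.
have eN : (fun y => - (c \* Y) y) = c \* (fun y => - Y y).
  by apply/funext => y /=; rewrite mulrN.
have RcY : {ae P, forall x, Rm t (fun y => - (c \* Y) y) x = c x * Rm t (fun y => - Y y) x}.
  rewrite eN; apply: (Rhom _ _ Lc c0 (LpN tT LY)).
  by rewrite -eN; exact: LpN tT LcY.
have ZcY : {ae P, forall y, shortfall t (c \* Y) y = (c \* shortfall t Y) y}.
  apply: (filterS2 _ _ RcY c0) => y RcYy cy.
  by rewrite /shortfall RcYy /= maxr_pMr // mulr0 mulrBr.
have LcZ : Lp (F t.+1) (c \* shortfall t Y).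
  have LZc := shortfall_Lp tT LcY.
  apply: (Lp_dominated tT _ LZc LZc).
    exact: GmeasM (filtration_sigma tT) _ _ Lc1.1 (shortfall_Lp tT LY).1.
  by apply: filterS ZcY => y <-; rewrite lerDl.
have UcZ := dyn_utility_congr_ae HU tT (shortfall_Lp tT LcY) LcZ ZcY.
apply: (filterS3 _ _ RcY UcZ (Uhom _ _ Lc c0 (shortfall_Lp tT LY) LcZ)) => x RcYx UcZx UZx.
by rewrite /Wmap -!/(shortfall t _) UcZx UZx RcYx; ring.
Qed.

Lemma Wmap_dyn_utility : is_dyn_utility P p T F (Wmap Rm U eta).
Proof.
move=> t tT; split.
- by move=> Y; exact: Wmap_Lp.
- by move=> lam Y; exact: Wmap_translation.
- by move=> Y Y'; exact: Wmap_monotone.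
- by move=> c Y; exact: Wmap_homogeneous.
Qed.

End one_step.

Section composition.
Context {Rm U : nat -> (Om -> R) -> Om -> R} {eta : nat -> Om -> R}.

Lemma Wchain_step {s Z} : (s < T)%N ->
  Wchain Rm U eta (T - s) s Z = Wmap Rm U eta s (Wchain Rm U eta (T - s.+1) s.+1 Z).
Proof. by move=> sT; rewrite -(subnSK sT). Qed.

Hypothesis HW : is_dyn_utility P p T F (Wmap Rm U eta).

Lemma Wchain_Lp {s Z} : (s <= T)%N -> Lp (F T) Z ->
  Lp (F s) (Wchain Rm U eta (T - s) s Z).
Proof.
move=> sT LZ; move: s sT; apply: backward_ind; first by rewrite subnn.
move=> s sT LWZ; rewrite (Wchain_step sT).
by have [+ _ _ _] := HW s sT; apply.
Qed.

Lemma Wchain_translation {s Z lam} : (s <= T)%N -> Lp (F T) Z -> Lp (F s) lam ->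
  {ae P, forall x, Wchain Rm U eta (T - s) s (Z \+ lam) x =
                   Wchain Rm U eta (T - s) s Z x + lam x}.
Proof.
move=> sT LZ; move: s sT lam; apply: backward_ind.
  by move=> lam _; rewrite subnn; exact: aeW.
move=> s sT IH lam Llam; rewrite !(Wchain_step sT).
have [_ Wtransl _ _] := HW s sT.
have Llam1 := Lp_le (leqnSn s) sT Llam.
have LWZ := Wchain_Lp sT LZ.
have LWZlam := Wchain_Lp sT (LpD (leqnn T) LZ (Lp_le sT (leqnn T) Llam1)).
have := dyn_utility_congr_ae HW sT LWZlam (LpD sT LWZ Llam1) (IH _ Llam1).
by apply: (filterS2 _ _ (Wtransl _ _ Llam LWZ)) => x -> ->.
Qed.

Context {X : nat -> Om -> R}.
Hypothesis LX : forall t, (1 <= t <= T)%N -> Lp (F t) (X t).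

Lemma cash_flow_Lp {t} : (t < T)%N -> Lp (F t.+1) (X t.+1).
Proof. by move=> tT; apply: LX; rewrite ltn0Sn. Qed.

Let tail_sum t : Om -> R := fun y => \sum_(t.+1 <= s < T.+1) X s y.

Lemma tail_sum_step {t} : (t < T)%N -> tail_sum t = tail_sum t.+1 \+ X t.+1.
Proof. by move=> tT; apply/funext => y; rewrite /tail_sum big_ltn ?ltnS // addrC. Qed.

Lemma tail_sum_Lp {t} : (t <= T)%N -> Lp (F T) (tail_sum t).
Proof.
move: t; apply: backward_ind.
  by rewrite /tail_sum; under eq_fun do rewrite big_geq //; exact: Lp_cst.
move=> t tT LS; rewrite (tail_sum_step tT).
exact: LpD (leqnn T) LS (Lp_le tT (leqnn T) (cash_flow_Lp tT)).
Qed.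

Lemma V_step {t} : (t < T)%N ->
  V Rm U eta T X t = Wmap Rm U eta t (fun x => X t.+1 x + V Rm U eta T X t.+1 x).
Proof.
move=> tT; rewrite /V -(subnSK tT) /=.
by have -> : (T - (T - t.+1).+1 = t)%N by rewrite (subnSK tT) subKn // ltnW.
Qed.

Lemma V_Lp {t} : (t <= T)%N -> Lp (F t) (V Rm U eta T X t).
Proof.
move: t; apply: backward_ind; first by rewrite /V subnn; exact: Lp_cst.
move=> t tT LV; rewrite (V_step tT); have [+ _ _ _] := HW t tT; apply.
exact: LpD tT (cash_flow_Lp tT) LV.
Qed.

Lemma V_Wchain {t} : (t <= T)%N ->
  {ae P, forall x, V Rm U eta T X t x = Wchain Rm U eta (T - t) t (tail_sum t) x}.
Proof.
move: t; apply: backward_ind.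
  by apply: aeW => x; rewrite /V subnn /= /tail_sum big_geq.
move=> t tT IH; rewrite (V_step tT) (Wchain_step tT) (tail_sum_step tT).
have LXt := cash_flow_Lp tT.
have LS := tail_sum_Lp tT.
have LXV := LpD tT LXt (V_Lp tT).
have LWSX := Wchain_Lp tT (LpD (leqnn T) LS (Lp_le tT (leqnn T) LXt)).
apply: (dyn_utility_congr_ae HW tT LXV LWSX).
apply: (filterS2 _ _ IH (Wchain_translation tT LS LXt)) => x -> ->.
by rewrite addrC.
Qed.

End composition.

End filtration.

Theorem proposition1 (R : realType) (d : measure_display) (Om : measurableType d)
  (P : probability Om R) (T : nat) (F : nat -> set (set Om)) (p : \bar R)
  (Rm U : nat -> (Om -> R) -> (Om -> R)) (eta : nat -> Om -> R) :
  (1 <= T)%N ->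
  is_filtration T F ->
  (0 <= p)%E ->
  is_dyn_risk P p T F Rm ->
  is_dyn_utility P p T F U ->
  (forall t, (t < T)%N -> inLp P 0%E (F t) (eta t) /\ {ae P, forall x, 0 < eta t x}) ->
  is_dyn_utility P p T F (Wmap Rm U eta) /\
  (forall X : nat -> Om -> R,
     (forall t, (1 <= t <= T)%N -> inLp P p (F t) (X t)) ->
     forall t, (t < T)%N ->
       {ae P, forall x, V Rm U eta T X t x =
          Wchain Rm U eta (T - t) t (fun y => \sum_(t.+1 <= s < T.+1) X s y) x}).
Proof.
move=> _ HF p0 HR HU Heta.
have HW := Wmap_dyn_utility HF p0 HR HU Heta.
split=> [|X LX t tT]; first exact: HW.
exact: (V_Wchain HF p0 HW LX (ltnW tT)).
Qed.
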